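(* Let $g_1,f_1,f_2$ be real numbers with $f_1\neq 0$, and let $g(t)=1+g_1t$ and $f(t)=f_1t+f_2t^2$. Then the quasi-Riordan array $[g,f]$, i.e. the infinite lower triangular matrix \[ [g,f]=\begin{bmatrix} 1& & & & \\ g_1 & f_1 & & & \\ 0& f_2& f_1 & & \\ 0&0 & f_2 & f_1&\\ \vdots& &\ddots &\ddots &\ddots\end{bmatrix}, \] is totally positive if and only if $g_1\ge 0$, $f_1\ge 0$ and $f_2\ge 0$.
   Context: For formal power series $g(t)=\sum_{n\ge0}g_nt^n$ with $g_0=1$ and $f(t)=\sum_{n\ge1}f_nt^n$ with $f_1\neq0$, the quasi-Riordan array $[g,f]$ is the infinite lower triangular matrix $(r_{n,k})_{n,k\ge0}$ whose $0$th column has generating function $g$ and whose $k$th column ($k\ge1$) has generating function $t^{k-1}f(t)$; i.e. $r_{n,0}=g_n$ and $r_{n,k}=f_{n-k+1}$ for $k\ge1$ (with $f_j=0$ for $j\le 0$). An infinite matrix is totally positive (TP) if all its minors (of all orders) are nonnegative. *)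

From HB Require Import structures.
From mathcomp Require Import all_boot all_order all_algebra.
From mathcomp Require Import reals.
Set Implicit Arguments. Unset Strict Implicit. Unset Printing Implicit Defensive.
Import Order.TTheory GRing.Theory Num.Theory.
Local Open Scope ring_scope.

Definition infmx (R : Type) := nat -> nat -> R.

Definition quasiRiordan (R : pzRingType) (g f : nat -> R) : infmx R :=
  fun n k => if k == 0%N then g n
             else if (k <= n)%N then f (n - k + 1)%N else 0.

Definition totally_positive (R : numDomainType) (M : infmx R) : Prop :=
  forall (m : nat) (rows cols : 'I_m -> nat),
    (forall a b : 'I_m, (a < b)%N -> (rows a < rows b)%N) ->
    (forall a b : 'I_m, (a < b)%N -> (cols a < cols b)%N) ->
    0 <= \det (\matrix_(a < m, b < m) M (rows a) (cols b)).

From HB Require Import structures.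
From mathcomp Require Import all_boot all_order all_algebra.
From mathcomp Require Import reals.
From mathcomp Require Import zify.
Set Implicit Arguments. Unset Strict Implicit. Unset Printing Implicit Defensive.
Import Order.TTheory GRing.Theory Num.Theory.
Local Open Scope ring_scope.

(* [g] has degree 1 and [f] degree 2, so [[g, f]] is a lower bidiagonal
   matrix whose nonzero entries are coefficients of [g] and [f].  Its 1x1
   minors force these coefficients to be nonnegative.  Conversely, in every
   square submatrix of a nonnegative lower bidiagonal matrix, the first row or
   the first column vanishes off the corner entry (depending on whether the
   first chosen row lies weakly above or strictly below the first chosen
   column), so the minor is the corner entry times a smaller minor of the
   same kind, and is nonnegative by induction. *)

Lemma det_row0_corner (R : comPzRingType) n (A : 'M[R]_n.+1) :
  (forall j, j != ord0 -> A ord0 j = 0) ->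
  \det A = A ord0 ord0 * \det (row' ord0 (col' ord0 A)).
Proof.
move=> A0j; rewrite (expand_det_row _ ord0) (bigD1 ord0) //= big1 ?addr0.
  by rewrite /cofactor /= expr0 mul1r.
by move=> j /A0j->; rewrite mul0r.
Qed.

Lemma det_col0_corner (R : comPzRingType) n (A : 'M[R]_n.+1) :
  (forall i, i != ord0 -> A i ord0 = 0) ->
  \det A = A ord0 ord0 * \det (row' ord0 (col' ord0 A)).
Proof.
move=> Ai0; rewrite -det_tr det_row0_corner => [|j /Ai0]; last by rewrite mxE.
by rewrite -det_tr !mxE; congr (_ * \det _); apply/matrixP => i j; rewrite !mxE.
Qed.

Section TotalPositivity.

Variable R : numDomainType.
Implicit Types M : infmx R.

Lemma totally_positive_ge0 M : totally_positive M -> forall i j, 0 <= M i j.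
Proof.
move=> tpM i j; have := tpM 1%N (fun=> i) (fun=> j).
by rewrite det_mx11 mxE; apply=> a b; rewrite !ord1.
Qed.

Definition lower_bidiagonal M :=
  (forall i j, (i < j)%N -> M i j = 0) /\ (forall i j, (j.+1 < i)%N -> M i j = 0).

Lemma lower_bidiagonal_totally_positive M :
  (forall i j, 0 <= M i j) -> lower_bidiagonal M -> totally_positive M.
Proof.
move=> M_ge0 [M_upper M_lower] m; elim: m => [|m IHm] rows cols rows_incr cols_incr.
  by rewrite det_mx00 ler01.
set A := \matrix_(a, b) M (rows a) (cols b).
have lift_gt0 (k : 'I_m.+1) : k != ord0 -> (ord0 < k)%N by rewrite lt0n.
have -> : \det A = A ord0 ord0 * \det (row' ord0 (col' ord0 A)).
  have [col_above | row_above] := ltnP (cols ord0) (rows ord0).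
    apply: det_col0_corner => i /lift_gt0 /rows_incr ri; rewrite mxE.
    by apply: M_lower; lia.
  apply: det_row0_corner => j /lift_gt0 /cols_incr cj; rewrite mxE.
  by apply: M_upper; lia.
rewrite mxE mulr_ge0 //.
have -> : row' ord0 (col' ord0 A) =
          \matrix_(a, b) M (rows (lift ord0 a)) (cols (lift ord0 b)).
  by apply/matrixP => a b; rewrite !mxE.
by apply: IHm => a b ab; [apply: rows_incr | apply: cols_incr]; rewrite !lift0.
Qed.

End TotalPositivity.

Lemma quasiRiordan_lower_bidiagonal (R : numDomainType) (g f : nat -> R) :
  (forall n, (2 <= n)%N -> g n = 0) -> (forall n, (3 <= n)%N -> f n = 0) ->
  lower_bidiagonal (quasiRiordan g f).
Proof.
rewrite /quasiRiordan => g_deg f_deg; split=> i j ij.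
  by rewrite ifN ?ifN //; lia.
case: eqP => [_ | /eqP j0]; first by apply: g_deg; lia.
by rewrite ifT ?f_deg //; lia.
Qed.

Lemma totally_positive_quasiRiordan_lowdegE (R : numDomainType) (g f : nat -> R) :
  (forall n, (2 <= n)%N -> g n = 0) -> (forall n, (3 <= n)%N -> f n = 0) ->
  totally_positive (quasiRiordan g f) <->
  (forall n, 0 <= g n) /\ (forall n, (0 < n)%N -> 0 <= f n).
Proof.
move=> g_deg f_deg; split=> [/totally_positive_ge0 r_ge0 | [g_ge0 f_ge0]].
  split=> [n | n n_gt0]; first exact: (r_ge0 n 0%N).
  by have := r_ge0 n 1%N; rewrite /quasiRiordan /= n_gt0 subn1 addn1 prednK.
apply: lower_bidiagonal_totally_positive; last exact: quasiRiordan_lower_bidiagonal.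
move=> i j; rewrite /quasiRiordan; case: ifP => // _.
by case: ifP => // _; rewrite f_ge0 ?addn1.
Qed.

Lemma coef_linear (R : nzRingType) (a : R) n :
  (1 + a *: 'X : {poly R})`_n = (n == 0%N)%:R + a * (n == 1%N)%:R.
Proof. by rewrite coefD coefZ coef1 coefX. Qed.

Lemma coef_quadratic (R : nzRingType) (a b : R) n :
  (a *: 'X + b *: 'X^2 : {poly R})`_n = a * (n == 1%N)%:R + b * (n == 2%N)%:R.
Proof. by rewrite coefD !coefZ coefX coefXn. Qed.

(* [f1 != 0] only makes [f] an admissible quasi-Riordan generating function;
   the equivalence holds without it. *)
Theorem corollary2p2 (R : realType) (g1 f1 f2 : R) :
  f1 != 0 ->
  (totally_positive
     (quasiRiordan (fun n => (1 + g1 *: 'X : {poly R})`_n)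
                   (fun n => (f1 *: 'X + f2 *: 'X^2 : {poly R})`_n))
   <-> [/\ 0 <= g1, 0 <= f1 & 0 <= f2]).
Proof.
move=> _; rewrite totally_positive_quasiRiordan_lowdegE; last 2 first.
- by case=> [|[|n]] // _; rewrite coef_linear mulr0 addr0.
- by case=> [|[|[|n]]] // _; rewrite coef_quadratic !mulr0 addr0.
split=> [[g_ge0 f_ge0] | [g1_ge0 f1_ge0 f2_ge0]].
  have := g_ge0 1%N; have := f_ge0 1%N isT; have := f_ge0 2%N isT.
  by rewrite !coef_linear !coef_quadratic /= !(mulr1, mulr0, addr0, add0r) => *; split.
split=> n *; [rewrite coef_linear | rewrite coef_quadratic].
  exact: addr_ge0 (ler0n _ _) (mulr_ge0 g1_ge0 (ler0n _ _)).
exact: addr_ge0 (mulr_ge0 f1_ge0 (ler0n _ _)) (mulr_ge0 f2_ge0 (ler0n _ _)).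
Qed.
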